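(* Let $K=\mathbb{Z}/3$ and let $G$ be a simple graph with $s\ge1$ edges that has no Eulerian subgraph with an even (positive) number of edges. Then for every $d\ge0$, $$\dim_K C_X(d)=\sum_{i\ge0}\binom{s}{d-2i},$$ where $\binom{s}{k}=0$ for $k<0$.
   Context: Let $G$ have vertex set $\{1,\dots,n\}$ and edges $e_1,\dots,e_s$, identified with variables of $S=K[t_1,\dots,t_s]$, $K$ a finite field. Let $X\subseteq\mathbb{P}^{s-1}$ be the image of the projective torus $\{(x_1:\dots:x_n): x_i\neq0\}\subseteq\mathbb{P}^{n-1}$ under the map whose $k$-th coordinate is $x_ix_j$ when $e_k=\{i,j\}$. Order $X=\{P_1,\dots,P_m\}$. For $d\ge0$, $C_X(d)\subseteq K^m$ is the image of the space $S_d$ of degree-$d$ forms under $f\mapsto \big(f(P_1)/t_1^d(P_1),\dots,f(P_m)/t_1^d(P_m)\big)$. An Eulerian subgraph is a subgraph in which every vertex has even degree. *)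

From HB Require Import structures.
From mathcomp Require Import all_boot all_order all_algebra.
From mathcomp Require Import mpoly.
Set Implicit Arguments. Unset Strict Implicit. Unset Printing Implicit Defensive.
Import GRing.Theory.
Local Open Scope ring_scope.

Notation K := 'F_3.

Definition simple_graph (n s : nat) (E : 'I_s -> {set 'I_n}) : Prop :=
  (forall k, #|E k| = 2%N) /\ injective E.

Definition sub_deg n s (E : 'I_s -> {set 'I_n}) (F : {set 'I_s}) (v : 'I_n) : nat :=
  #|[set k in F | v \in E k]|.

Definition eulerian n s (E : 'I_s -> {set 'I_n}) (F : {set 'I_s}) : Prop :=
  forall v, ~~ odd (sub_deg E F v).

(* projective torus points, represented by affine vectors with nonzero coords *)
Definition torus (n : nat) : {set {ffun 'I_n -> K}} :=
  [set x : {ffun 'I_n -> K} | [forall i, x i != 0]].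

Definition phiE n s (E : 'I_s -> {set 'I_n}) (x : {ffun 'I_n -> K}) : {ffun 'I_s -> K} :=
  [ffun k => \prod_(i in E k) x i].

(* the projective point [y] in P^{s-1}, as the set of its affine representatives *)
Definition pclass s (y : {ffun 'I_s -> K}) : {set {ffun 'I_s -> K}} :=
  [set z | [exists c : K, (c != 0) && (z == [ffun k => c * y k])]].

Definition Xset n s (E : 'I_s -> {set 'I_n}) : {set {set {ffun 'I_s -> K}}} :=
  [set pclass (phiE E x) | x in torus n].

Definition rep s (P : {set {ffun 'I_s -> K}}) : {ffun 'I_s -> K} :=
  odflt 0 [pick y in P].

(* the evaluation vector (f(P_1)/t_1^d(P_1), ..., f(P_m)/t_1^d(P_m)),
   X ordered as P_j := enum_val j *)
Definition evvec n s (E : 'I_s -> {set 'I_n}) (t1 : 'I_s) (d : nat)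
  (f : {mpoly K[s]}) : 'rV[K]_(#|Xset E|) :=
  \row_(j < #|Xset E|)
     (f.@[fun k => rep (enum_val j) k] / (rep (enum_val j) t1) ^+ d).

Definition in_CX n s (E : 'I_s -> {set 'I_n}) (t1 : 'I_s) (d : nat)
  (v : 'rV[K]_(#|Xset E|)) : Prop :=
  exists f : {mpoly K[s]}, f \is d.-homog /\ v = evvec E t1 d f.
Arguments in_CX {n s} E t1 d v.

From HB Require Import structures.
From mathcomp Require Import all_boot all_order all_algebra all_field.
From mathcomp Require Import mpoly.
From mathcomp Require Import zify.

Set Implicit Arguments.
Unset Strict Implicit.
Unset Printing Implicit Defensive.
Import GRing.Theory.
Local Open Scope ring_scope.

(* The coordinates of the points of X are products of nonzero elements of
   F_3, i.e. of elements squaring to 1.  Hence, after division by t_1^d, a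
   monomial t^a of degree d evaluates on X exactly like
   t^S t_1^(d - |S|) with S = {k | a_k odd}, and the sets S arising this way
   are those with |S| <= d and |S| = d (mod 2): there are
   \sum_i C(s, d - 2i) of them.  Their evaluation vectors are independent:
   pair two of them by summing the product of their entries over the
   torus.  The pairing of S and T is the character sum of
   x |-> \prod_(k in S Δ T) x_i x_j (e_k = {i, j}), which is 2^n != 0 when
   S = T.  When S != T, the edge set S Δ T is nonempty of even size, hence
   not Eulerian by hypothesis; changing the sign of x at a vertex of odd
   degree in S Δ T negates the character, so the sum vanishes. *)

Lemma Fp3_two_neq0 : (2%:R : K) != 0.
Proof.
have char3 : (3%:R : K) = 0 := GRing.pcharf0 (pchar_Fp (isT : prime 3)).
have -> : (2%:R : K) = -1.
  by apply/eqP; rewrite -subr_eq0 opprK -(natrD _ 2 1) char3.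
by rewrite oppr_eq0 oner_eq0.
Qed.

Lemma Fp3_sqrf (z : K) : z != 0 -> z ^+ 2 = 1.
Proof.
move=> z_neq0; have := expf_card z; rewrite card_Fp //.
by rewrite exprS -{3}(mulr1 z) => /(mulfI z_neq0).
Qed.

Lemma expr_odd (R : pzRingType) (z : R) (a : nat) :
  z ^+ 2 = 1 -> z ^+ a = z ^+ odd a.
Proof.
by move=> z2; rewrite {1}(divn_eq a 2) exprD mulnC exprM z2 expr1n mul1r modn2.
Qed.

Lemma eq_oppr0 (R : idomainType) (a : R) : (2%:R : R) != 0 -> a = - a -> a = 0.
Proof.
move=> two_neq0 a_opp; apply/eqP.
have : a * 2%:R == 0 by rewrite mulr_natr mulr2n {1}a_opp addNr.
by rewrite mulf_eq0 (negPf two_neq0) orbF.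
Qed.

Lemma card_sum_mem (T : finType) (A : {pred T}) : #|A| = (\sum_k (k \in A))%N.
Proof. by rewrite -sum1_card big_mkcond /=; apply: eq_bigr => k _; case: (k \in A). Qed.

Lemma odd_card (T : finType) (A : {pred T}) : odd #|A| = \big[addb/false]_k (k \in A).
Proof.
rewrite card_sum_mem (big_morph odd oddD (erefl : odd 0 = false)).
by apply: eq_bigr => k _; rewrite oddb.
Qed.

Definition symd (T : finType) (S U : {set T}) : {set T} :=
  [set k | (k \in S) != (k \in U)].

Lemma symd_eq0 (T : finType) (S U : {set T}) : (symd S U == set0) = (S == U).
Proof.
apply/eqP/eqP => [SU0 | ->]; last by apply/setP => k; rewrite !inE eqxx.
apply/setP => k; have := in_set0 k; rewrite -SU0 inE.
by case: (k \in S); case: (k \in U).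
Qed.

Lemma odd_card_symd (T : finType) (S U : {set T}) :
  odd #|symd S U| = odd #|S| (+) odd #|U|.
Proof.
rewrite !odd_card -big_split /=; apply: eq_bigr => k _; rewrite inE.
by case: (k \in S); case: (k \in U).
Qed.

Lemma sum_eq_sub_double (k d : nat) :
  (\sum_(i < d./2.+1) (k == d - 2 * i) = (k <= d) && (odd k == odd d))%N.
Proof.
case: (boolP ((k <= d)%N && (odd k == odd d))) => [/andP[le_kd /eqP odd_kd] | h].
  have even_dk : ((d - k) %% 2 = 0)%N by rewrite modn2 oddB // odd_kd addbb.
  have lt_i0 : ((d - k) %/ 2 < d./2.+1)%N by rewrite -divn2; lia.
  rewrite (bigD1 (Ordinal lt_i0)) //= big1 => [|i ne_i0].
    by have -> : (k == d - 2 * ((d - k) %/ 2))%N by apply/eqP; lia.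
  apply/eqP; rewrite eqb0; apply/negP => /eqP k_eq; move/eqP: ne_i0; apply.
  apply/val_inj => /=; have := ltn_ord i.
  by move: (nat_of_ord i) k_eq => j k_eq; rewrite -divn2; lia.
rewrite big1 // => i _; apply/eqP; rewrite eqb0; apply: contra h => /eqP ->.
have := ltn_ord i; move: (nat_of_ord i) => j; rewrite -divn2 => lt_j.
by rewrite leq_subr oddB ?oddM ?addbF //=; lia.
Qed.

Definition parity_sets (T : finType) (d : nat) : {set {set T}} :=
  [set S : {set T} | (#|S| <= d)%N && (odd #|S| == odd d)].

Lemma card_parity_sets (T : finType) (d : nat) :
  #|parity_sets T d| = (\sum_(i < d./2.+1) 'C(#|T|, d - 2 * i))%N.
Proof.
rewrite card_sum_mem.
under eq_bigr => S _ do rewrite inE -sum_eq_sub_double.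
rewrite exchange_big /=; apply: eq_bigr => i _.
by rewrite -card_draws card_sum_mem; apply: eq_bigr => S _; rewrite inE.
Qed.

Section ParityMonomials.
Variables (s : nat) (t1 : 'I_s) (d : nat).

Definition parity_mnm (S : {set 'I_s}) : 'X_{1..s} :=
  [multinom ((k \in S) + (if k == t1 then d - #|S| else 0))%N | k < s].

Lemma mdeg_parity_mnm (S : {set 'I_s}) : (#|S| <= d)%N -> mdeg (parity_mnm S) = d.
Proof.
move=> le_Sd; rewrite mdegE.
under eq_bigr => k _ do rewrite mnmE.
by rewrite big_split /= -card_sum_mem -big_mkcond /= big_pred1_eq subnKC.
Qed.

Lemma odd_parity_mnm (S : {set 'I_s}) (k : 'I_s) :
  S \in parity_sets 'I_s d -> odd (parity_mnm S k) = (k \in S).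
Proof.
rewrite inE => /andP[le_Sd /eqP odd_S]; rewrite mnmE oddD oddb.
by case: (k == t1); rewrite /= ?addbF // oddB // odd_S addbb addbF.
Qed.

Lemma odd_set_parity_sets (m : 'X_{1..s}) :
  mdeg m = d -> [set k | odd (m k)] \in parity_sets 'I_s d.
Proof.
move=> deg_m; rewrite inE -deg_m mdegE; apply/andP; split.
  rewrite card_sum_mem; apply: leq_sum => k _; rewrite inE.
  by case: (m k) => [|a] //=; case: (odd a).
rewrite odd_card (big_morph odd oddD (erefl : odd 0 = false)).
by apply/eqP/eq_bigr => k _; rewrite inE.
Qed.

End ParityMonomials.

Lemma mevalX_odd (R : comNzRingType) (s : nat) (r : 'I_s -> R) (m1 m2 : 'X_{1..s}) :
  (forall k, r k ^+ 2 = 1) -> (forall k, odd (m1 k) = odd (m2 k)) ->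
  'X_[m1].@[r] = 'X_[m2].@[r].
Proof.
move=> r2 odd_m; rewrite !mevalX; apply: eq_bigr => k _.
by rewrite expr_odd // [RHS]expr_odd // odd_m.
Qed.

Lemma mevalX_scale (R : comNzRingType) (s : nat) (c : R) (y : {ffun 'I_s -> R})
    (m : 'X_{1..s}) :
  'X_[m].@[[ffun k => c * y k]] = c ^+ mdeg m * 'X_[m].@[y].
Proof.
rewrite !mevalX mdegE (big_morph _ (exprD c) (expr0 c)) -big_split /=.
by apply: eq_bigr => k _; rewrite ffunE exprMn.
Qed.

Section EvaluationCode.
Variables (n s : nat) (E : 'I_s -> {set 'I_n}) (t1 : 'I_s) (d : nat).
Local Notation m := #|Xset E|.
Local Notation ev := (evvec E t1 d).
Local Notation Sd := (parity_sets 'I_s d).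

Lemma evvecD f g : ev (f + g) = ev f + ev g.
Proof. by apply/rowP => j; rewrite !mxE mevalD mulrDl. Qed.

Lemma evvecZ c f : ev (c *: f) = c *: ev f.
Proof. by apply/rowP => j; rewrite !mxE mevalZ mulrA. Qed.

Lemma evvec_sum (I : Type) (r : seq I) (P : pred I) (F : I -> {mpoly K[s]}) :
  ev (\sum_(i <- r | P i) F i) = \sum_(i <- r | P i) ev (F i).
Proof.
apply: (big_morph _ evvecD).
by apply/rowP => j; rewrite !mxE meval0 mul0r.
Qed.

Lemma torusP (x : {ffun 'I_n -> K}) : reflect (forall i, x i != 0) (x \in torus n).
Proof. by rewrite inE; apply: forallP. Qed.

Lemma phiE_neq0 (x : {ffun 'I_n -> K}) k : x \in torus n -> phiE E x k != 0.
Proof. by move/torusP => x_neq0; rewrite ffunE; apply/prodf_neq0 => i _. Qed.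

Lemma rep_pclass (y : {ffun 'I_s -> K}) :
  exists2 c : K, c != 0 & rep (pclass y) = [ffun k => c * y k].
Proof.
rewrite /rep; case: pickP => [z | no_rep] /=.
  by rewrite inE => /existsP[c /andP[c_neq0 /eqP ->]]; exists c.
have := no_rep y; rewrite inE => /negbT/existsPn/(_ 1).
by rewrite oner_eq0 /= => /eqP[]; apply/ffunP => k; rewrite ffunE mul1r.
Qed.

Lemma rep_neq0 (j : 'I_m) k : rep (enum_val j) k != 0.
Proof.
have /imsetP[x x_torus ->] := enum_valP j.
have [c c_neq0 ->] := rep_pclass (phiE E x).
by rewrite ffunE mulf_neq0 // phiE_neq0.
Qed.

Definition pvec (S : {set 'I_s}) : 'rV[K]_m := ev 'X_[parity_mnm t1 d S].

Lemma evvecX (mu : 'X_{1..s}) : mdeg mu = d -> ev 'X_[mu] = pvec [set k | odd (mu k)].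
Proof.
move=> deg_mu; apply/rowP => j; rewrite !mxE; congr (_ / _).
apply: mevalX_odd => k; first by rewrite Fp3_sqrf ?rep_neq0.
by rewrite odd_parity_mnm ?odd_set_parity_sets // inE.
Qed.

Definition pvecs := [tuple pvec (enum_val i) | i < #|Sd|].

Lemma pvecs_nth (i : 'I_#|Sd|) : pvecs`_i = pvec (enum_val i).
Proof. exact: nth_mktuple. Qed.

Lemma span_pvecs v : v \in <<pvecs>>%VS <-> in_CX E t1 d v.
Proof.
split.
  move/coord_span => ->.
  exists (\sum_(i < #|Sd|) coord pvecs i v *: 'X_[parity_mnm t1 d (enum_val i)]).
  split; last by rewrite evvec_sum; apply: eq_bigr => i _; rewrite evvecZ pvecs_nth.
  apply: rpred_sum => i _; apply: rpredZ; rewrite dhomogX; apply/eqP.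
  by apply: mdeg_parity_mnm; have := enum_valP i; rewrite inE => /andP[].
case=> f [f_homog ->]; rewrite {1}(mpolyE f) evvec_sum big_seq.
apply: memv_suml => mu mu_supp; rewrite evvecZ; apply: memvZ.
have deg_mu := dhomog_mf f_homog mu_supp.
rewrite evvecX //; apply: memv_span; have Sd_mu := odd_set_parity_sets deg_mu.
rewrite -(enum_rankK_in Sd_mu Sd_mu) -(tnth_mktuple (fun i => pvec (enum_val i))).
exact: mem_tnth.
Qed.

Definition torus_one : {ffun 'I_n -> K} := [ffun=> 1].

Lemma torus_one_in : torus_one \in torus n.
Proof. by apply/torusP => i; rewrite ffunE oner_eq0. Qed.

Definition point_idx (x : {ffun 'I_n -> K}) : 'I_m :=
  enum_rank_in (imset_f (fun y => pclass (phiE E y)) torus_one_in) (pclass (phiE E x)).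

Lemma pvec_point (S : {set 'I_s}) x : x \in torus n -> S \in Sd ->
  pvec S 0 (point_idx x) = 'X_[parity_mnm t1 d S].@[phiE E x] / phiE E x t1 ^+ d.
Proof.
move=> x_torus; rewrite inE => /andP[le_Sd _].
rewrite mxE /point_idx enum_rankK_in; last exact: imset_f.
have [c c_neq0 ->] := rep_pclass (phiE E x).
rewrite mevalX_scale mdeg_parity_mnm // ffunE exprMn invfM mulrACA divff ?mul1r //.
exact: expf_neq0.
Qed.

Definition edge_char (F : {set 'I_s}) (x : {ffun 'I_n -> K}) : K :=
  \prod_(k in F) phiE E x k.

Lemma pvec_mul_point (S T : {set 'I_s}) x : x \in torus n -> S \in Sd -> T \in Sd ->
  pvec S 0 (point_idx x) * pvec T 0 (point_idx x) = edge_char (symd S T) x.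
Proof.
move=> x_torus Sd_S Sd_T; rewrite !pvec_point // mulrACA -invfM -exprMn -expr2.
rewrite Fp3_sqrf ?phiE_neq0 // expr1n invr1 mulr1 -mevalM -mpolyXD mevalX.
rewrite /edge_char [RHS]big_mkcond /=; apply: eq_bigr => k _.
rewrite expr_odd ?Fp3_sqrf ?phiE_neq0 // mnmDE oddD !odd_parity_mnm // inE.
by case: (k \in S); case: (k \in T).
Qed.

Definition torus_pairing (u v : 'rV[K]_m) : K :=
  \sum_(x in torus n) u 0 (point_idx x) * v 0 (point_idx x).

Lemma torus_pairing_sumr u (I : finType) (c : I -> K) (v : I -> 'rV[K]_m) :
  torus_pairing u (\sum_i c i *: v i) = \sum_i c i * torus_pairing u (v i).
Proof.
rewrite /torus_pairing; under [RHS]eq_bigr => i _ do rewrite mulr_sumr.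
rewrite exchange_big /=; apply: eq_bigr => x _.
by rewrite summxE mulr_sumr; apply: eq_bigr => i _; rewrite mxE mulrCA.
Qed.

Definition flip_vertex (v : 'I_n) (x : {ffun 'I_n -> K}) : {ffun 'I_n -> K} :=
  [ffun i => if i == v then - x i else x i].

Lemma flip_vertexK v : involutive (flip_vertex v).
Proof. by move=> x; apply/ffunP => i; rewrite !ffunE; case: (i == v); rewrite ?opprK. Qed.

Lemma flip_vertex_torus v x : (flip_vertex v x \in torus n) = (x \in torus n).
Proof.
apply/torusP/torusP => x_neq0 i; have := x_neq0 i; rewrite ?ffunE;
  by case: (i == v); rewrite ?oppr_eq0.
Qed.

Lemma phiE_flip_vertex v x k :
  phiE E (flip_vertex v x) k = (if v \in E k then -1 else 1) * phiE E x k.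
Proof.
rewrite !ffunE; case: (boolP (v \in E k)) => v_ek.
  rewrite (bigD1 v v_ek) [in RHS](bigD1 v v_ek) /= ffunE eqxx mulN1r mulNr.
  by congr (- (_ * _)); apply: eq_bigr => i /andP[_ /negPf i_v]; rewrite ffunE i_v.
rewrite mul1r; apply: eq_bigr => i i_ek; rewrite ffunE.
by case: eqP => // i_v; rewrite -i_v i_ek in v_ek.
Qed.

Lemma edge_char_flip_vertex F v x :
  edge_char F (flip_vertex v x) = (-1) ^+ sub_deg E F v * edge_char F x.
Proof.
rewrite /edge_char; under eq_bigr => k _ do rewrite phiE_flip_vertex.
rewrite big_split /= -big_mkcondr prodr_const; congr (_ ^+ _ * _).
by apply: eq_card => k; rewrite inE.
Qed.

Lemma sum_edge_char_set0 : \sum_(x in torus n) edge_char set0 x = (2 ^ n)%:R.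
Proof.
under eq_bigr => x _ do rewrite /edge_char big_set0.
rewrite sumr_const; congr (_%:R).
have -> : #|torus n| = #|@ffun_on_mem 'I_n K (mem [pred c : K | c != 0])|.
  by apply: eq_card => x; rewrite inE; apply/forallP/ffun_onP.
by rewrite card_ffun_on cardC1 card_Fp // card_ord.
Qed.

Lemma sum_edge_char_odd_deg F v :
  odd (sub_deg E F v) -> \sum_(x in torus n) edge_char F x = 0.
Proof.
move=> odd_v; apply: eq_oppr0; first exact: Fp3_two_neq0.
rewrite {1}(reindex_inj (can_inj (flip_vertexK v))) /=.
under eq_bigl => x do rewrite flip_vertex_torus.
rewrite -sumrN; apply: eq_bigr => x _.
by rewrite edge_char_flip_vertex -signr_odd odd_v mulN1r.
Qed.

Hypothesis no_even_eulerian :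
  ~ (exists F : {set 'I_s}, [/\ (0 < #|F|)%N, ~~ odd #|F| & eulerian E F]).

Lemma torus_pairing_pvec (S T : {set 'I_s}) : S \in Sd -> T \in Sd ->
  torus_pairing (pvec S) (pvec T) = if S == T then (2 ^ n)%:R else 0.
Proof.
move=> Sd_S Sd_T; rewrite /torus_pairing.
under eq_bigr => x x_torus do rewrite pvec_mul_point //.
have [<- | ne_ST] := eqVneq S T.
  have /eqP -> : symd S S == set0 by rewrite symd_eq0.
  exact: sum_edge_char_set0.
case: (pickP (fun v => odd (sub_deg E (symd S T) v))) => [v odd_v | even_deg].
  exact: sum_edge_char_odd_deg odd_v.
exfalso; apply: no_even_eulerian; exists (symd S T); split.
- by rewrite card_gt0 symd_eq0.
- move: Sd_S Sd_T; rewrite odd_card_symd !inE => /andP[_ /eqP ->] /andP[_ /eqP ->].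
  by rewrite addbb.
- by move=> v; rewrite even_deg.
Qed.

Lemma free_pvecs : free pvecs.
Proof.
apply/freeP => c sum_c0 i0.
have := congr1 (torus_pairing (pvec (enum_val i0))) sum_c0.
rewrite torus_pairing_sumr (bigD1 i0) //= big1 => [|i ne_i]; last first.
  rewrite pvecs_nth torus_pairing_pvec ?enum_valP //.
  by rewrite (inj_eq enum_val_inj) eq_sym (negPf ne_i) /= mulr0.
rewrite pvecs_nth torus_pairing_pvec ?enum_valP // eqxx addr0.
rewrite /torus_pairing big1 => [|x _]; last by rewrite [X in _ * X]mxE mulr0.
by move/eqP; rewrite mulf_eq0 natrX expf_eq0 (negPf Fp3_two_neq0) andbF orbF => /eqP.
Qed.

End EvaluationCode.

Theorem mainTheorem4 (n s : nat) (E : 'I_s -> {set 'I_n}) (hs : (0 < s)%N) :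
  simple_graph E ->
  ~ (exists F : {set 'I_s}, [/\ (0 < #|F|)%N, ~~ odd #|F| & eulerian E F]) ->
  forall d : nat,
    exists C : {vspace 'rV[K]_(#|Xset E|)},
      (forall v, v \in C <-> in_CX E (Ordinal hs) d v) /\
      \dim C = (\sum_(i < d./2.+1) 'C(s, d - 2 * i))%N.
Proof.
move=> _ no_even_eulerian d.
exists <<pvecs E (Ordinal hs) d>>%VS; split; first exact: span_pvecs.
by rewrite (eqP (free_pvecs _ _ no_even_eulerian)) size_tuple card_parity_sets card_ord.
Qed.
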